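(* Let $J=\{m_1,\dots,m_d\}\subset\mathbb{Z}_n$ be a $d$-element subset that generates $\mathbb{Z}_n$ and is exceptional. Then there exist $n$-th roots of unity $z_{d+1},\dots,z_{2d}$ such that $$z=(\omega^{m_1},\dots,\omega^{m_d},z_{d+1},\dots,z_{2d})\in V$$ and $z$ is an exceptional point, i.e. $(z_{d+1},\dots,z_{2d})$ is not a permutation of $(\omega^{m_1},\dots,\omega^{m_d})$.
   Context: Let $\omega=e^{2\pi i/n}$. For a $d$-element subset $J\subset\mathbb{Z}_n$, the cyclic harmonic frame $\Phi_J$ is the sequence $(v_k)_{k\in\mathbb{Z}_n}$ with $v_k=(\omega^{jk})_{j\in J}\in\mathbb{C}^J\cong\mathbb{C}^d$. Two finite sequences $(v_k)_{k\in I}$, $(w_k)_{k\in I'}$ in $\mathbb{C}^d$ are unitarily equivalent if there is a unitary $U$ and a bijection $\sigma:I\to I'$ with $v_k=Uw_{\sigma(k)}$ for all $k$. Two $d$-element subsets $J,K\subset\mathbb{Z}_n$ are multiplicatively equivalent if $K=aJ=\{aj:j\in J\}$ for some unit $a\in\mathbb{Z}_n^*$. A $d$-element subset $J\subset\mathbb{Z}_n$ is exceptional if there is a $d$-element subset $K\subset\mathbb{Z}_n$, not multiplicatively equivalent to $J$, such that $\Phi_J$ and $\Phi_K$ are unitarily equivalent. Let $V=\{z\in\mathbb{C}^{2d}:\sum_{j=1}^d z_j-\sum_{j=d+1}^{2d}z_j=0\}$. A point $z\in V$ whose coordinates are roots of unity is called exceptional if $(z_{d+1},\dots,z_{2d})$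 is not a permutation of $(z_1,\dots,z_d)$. *)

From HB Require Import structures.
From mathcomp Require Import all_boot all_order all_fingroup all_algebra all_field.
From mathcomp Require Import spectral.
Set Implicit Arguments. Unset Strict Implicit. Unset Printing Implicit Defensive.
Import Order.TTheory GRing.Theory Num.Theory.
Local Open Scope ring_scope.

(* omega = e^{2 pi i / n}.  n.-root (-1) is the n-th root of -1 with minimal
   nonnegative argument, i.e. e^{i pi / n}; its square is e^{2 pi i / n}. *)
Definition omega (n : nat) : algC := (n.-root (-1)) ^+ 2.

(* Elements of Z_n are represented by 'I_n; a d-element subset J of Z_n is
   given by an injective enumeration m : 'I_d -> 'I_n (J = {m_1,...,m_d}). *)
Definition subset_of (n d : nat) (m : 'I_d -> 'I_n) : {set 'I_n} :=
  [set m i | i : 'I_d].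

Definition harm_vec (n d : nat) (m : 'I_d -> 'I_n) (k : 'I_n) : 'cV[algC]_d :=
  \col_(i < d) omega n ^+ (m i * k)%N.

Definition unit_equiv (n d : nat) (m m' : 'I_d -> 'I_n) : Prop :=
  exists (U : 'M[algC]_d) (s : 'I_n -> 'I_n),
    U \is unitarymx /\ bijective s /\
    forall k : 'I_n, harm_vec m k = U *m harm_vec m' (s k).

Definition mult_equiv (n : nat) (J K : {set 'I_n}) : Prop :=
  exists a : 'I_n, coprime a n /\
    forall k : 'I_n, (k \in K) = [exists j in J, ((a * j) %% n)%N == k].

Definition generates (n : nat) (J : {set 'I_n}) : Prop :=
  forall x : 'I_n, exists c : 'I_n -> nat,
    (x : nat) = ((\sum_(j in J) c j * j) %% n)%N.

Definition exceptional (n d : nat) (m : 'I_d -> 'I_n) : Prop :=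
  exists m' : 'I_d -> 'I_n, injective m' /\
    ~ mult_equiv (subset_of m) (subset_of m') /\ unit_equiv m m'.

Definition in_V (d : nat) (z : 'I_(d + d) -> algC) : Prop :=
  \sum_(j < d) z (lshift d j) - \sum_(j < d) z (rshift d j) = 0.

Definition is_root_of_unity (x : algC) : Prop := exists k : nat, (0 < k)%N /\ x ^+ k = 1.

Definition exceptional_point (d : nat) (z : 'I_(d + d) -> algC) : Prop :=
  in_V z /\ (forall i, is_root_of_unity (z i)) /\
  ~ (exists s : 'S_d, forall j : 'I_d, z (rshift d (s j)) = z (lshift d j)).

Definition join_pt (d : nat) (x y : 'I_d -> algC) : 'I_(d + d) -> algC :=
  fun i => match split i with inl j => x j | inr j => y j end.

From HB Require Import structures.
From mathcomp Require Import all_boot all_order all_fingroup all_algebra all_field.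
From mathcomp Require Import spectral cyclic.
From mathcomp.algebra_tactics Require Import ring.

(* Unitary equivalence preserves the inner product of the frame vectors [v_0] and
   [v_1]; for [Phi_J] it is [sum_j omega^(m_j)], and for [Phi_K] it is
   [sum_j omega^(e m'_j)] with [e = s(1) - s(0)] for the reindexing [s], which
   gives the point of [V].
   If the second half were a permutation of the first, then [J = e K]; as [J]
   generates [Z_n], [e] is a unit, so [K = e^-1 J], contradicting exceptionality.
   The one analytic input is that [omega n = (n.-root (-1)) ^+ 2] is a primitive
   [n]-th root of unity, derived from the maximality of the real part of
   [n.-root (-1)] among the [n]-th roots of [-1]. *)

Set Implicit Arguments. Unset Strict Implicit. Unset Printing Implicit Defensive.
Import Order.TTheory GRing.Theory Num.Theory.
Local Open Scope ring_scope.

Lemma normC_expr_eq1 (u : algC) n : (0 < n)%N -> `|u ^+ n| = 1 -> `|u| = 1.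
Proof. by move=> n_gt0; rewrite normrX => /eqP; rewrite pexpr_eq1 // => /eqP. Qed.

Lemma Re_lt1_unit (u : algC) : `|u| = 1 -> u != 1 -> 'Re u < 1.
Proof.
move=> u1 /negPf neq_u1; rewrite -u1 (lt_leif (leif_Re_Creal u)).
by apply: contraFN neq_u1 => /ger0_norm <-; rewrite u1.
Qed.

(* Geometrically: if rotating [w] by [+arg u] and by [-arg u] does not increase
   its real part, then [|arg u| >= 2 |arg w|]. *)
Lemma Re_le_Re_sqr (w u : algC) : `|w| = 1 -> `|u| = 1 -> 'Re u < 1 ->
  'Re (w * u) <= 'Re w -> 'Re (w * u^*) <= 'Re w ->
  0 <= 'Re w /\ 'Re u <= 'Re (w ^+ 2).
Proof.
move=> w_1 u_1 a_lt1.
have w1 : 'Re w ^+ 2 + 'Im w ^+ 2 = 1 by rewrite -normC2_Re_Im w_1 expr1n.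
have u1 : 'Re u ^+ 2 + 'Im u ^+ 2 = 1 by rewrite -normC2_Re_Im u_1 expr1n.
rewrite expr2 !ReM Re_conj Im_conj.
set c := 'Re w in w1 *; set s := 'Im w in w1 *.
set a := 'Re u in u1 a_lt1 *; set b := 'Im u in u1 *.
move=> Re_wu_le Re_wuc_le.
have P_ge0 : 0 <= c * (1 - a) + s * b.
  have -> : c * (1 - a) + s * b = c - (c * a - s * b) by ring.
  by rewrite subr_ge0.
have Q_ge0 : 0 <= c * (1 - a) - s * b.
  have -> : c * (1 - a) - s * b = c - (c * a - s * - b) by ring.
  by rewrite subr_ge0.
have a1_gt0 : 0 < 1 - a by rewrite subr_gt0.
split.
  have := addr_ge0 P_ge0 Q_ge0.
  have -> : c * (1 - a) + s * b + (c * (1 - a) - s * b) = (1 - a) * (c * 2) by ring.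
  by rewrite pmulr_rge0 // pmulr_lge0 ?ltr0n.
have := mulr_ge0 Q_ge0 P_ge0.
have -> : (c * (1 - a) - s * b) * (c * (1 - a) + s * b) =
    (1 - a) * (c * c - s * s - a) + (a ^+ 2 - a) * (c ^+ 2 + s ^+ 2 - 1)
    - s ^+ 2 * (a ^+ 2 + b ^+ 2 - 1) by ring.
by rewrite w1 u1 !subrr !mulr0 subr0 addr0 pmulr_rge0 // subr_ge0.
Qed.

Lemma Re_sqr_unit (w : algC) : `|w| = 1 -> 'Re (w ^+ 2) = 'Re w ^+ 2 * 2 - 1.
Proof.
move=> w_1; have w1 : 'Re w ^+ 2 + 'Im w ^+ 2 = 1 by rewrite -normC2_Re_Im w_1 expr1n.
have Im2 : 'Im w * 'Im w = 1 - 'Re w ^+ 2 by rewrite -w1; ring.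
by rewrite expr2 ReM Im2; ring.
Qed.

Lemma unity_conjC (u : algC) n : (0 < n)%N -> u ^+ n = 1 -> u^* = u ^+ n.-1.
Proof.
move=> n_gt0 un1.
have u_1 : `|u| = 1 by apply: (normC_expr_eq1 n_gt0); rewrite un1 normr1.
have u_neq0 : u != 0 by rewrite -normr_eq0 u_1 oner_eq0.
by apply: (mulfI u_neq0); rewrite -normCK u_1 expr1n -exprS prednK.
Qed.

Lemma Re_le_rootN1 n (y : algC) : (0 < n)%N -> y ^+ n = -1 ->
  'Re y <= 'Re (n.-root (-1)).
Proof.
move=> n_gt0 yn; have [|/ltW Im_le0] := real_ge0P (Creal_Im y).
  exact: rootC_Re_max.
rewrite -Re_conj; apply: rootC_Re_max => //.
  by rewrite -rmorphXn yn rmorphN1.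
by rewrite Im_conj oppr_ge0.
Qed.

Lemma omega_unity n : (0 < n)%N -> omega n ^+ n = 1.
Proof. by move=> n_gt0; rewrite -exprM mulnC exprM rootCK // sqrrN expr1n. Qed.

Lemma omega_expr_unity n a : (0 < n)%N -> (omega n ^+ a) ^+ n = 1.
Proof. by move=> n_gt0; rewrite -exprM mulnC exprM omega_unity // expr1n. Qed.

(* [omega n = z ^+ 2] where [z], an [n]-th root of [-1], has maximal real part;
   so [z * u] and [z * u^*] are [n]-th roots of [-1] for every [n]-th root of unity [u]. *)
Lemma Re_unity_le_omega n (u : algC) : (0 < n)%N -> u ^+ n = 1 -> u != 1 ->
  'Re u <= 'Re (omega n).
Proof.
move=> n_gt0 un1 u_neq1; rewrite /omega; set z := n.-root (-1).
have zn : z ^+ n = -1 by rewrite rootCK.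
have u_1 : `|u| = 1 by apply: (normC_expr_eq1 n_gt0); rewrite un1 normr1.
have z_1 : `|z| = 1 by apply: (normC_expr_eq1 n_gt0); rewrite zn normrN1.
have [||_ //] := Re_le_Re_sqr z_1 u_1 (Re_lt1_unit u_1 u_neq1).
  by apply: Re_le_rootN1 n_gt0 _; rewrite exprMn zn un1 mulr1.
by apply: Re_le_rootN1 n_gt0 _; rewrite exprMn zn -rmorphXn un1 rmorph1 mulr1.
Qed.

Lemma omega_neq1 n : (1 < n)%N -> omega n != 1.
Proof.
move=> n_gt1; have n_gt0 := ltnW n_gt1; rewrite /omega; set z := n.-root (-1).
have zn : z ^+ n = -1 by rewrite rootCK.
rewrite sqrf_eq1; apply/norP; split; apply/negP => /eqP z1.
  by move: zn; rewrite z1 expr1n => /eqP; rewrite -subr_eq0 opprK -mulr2n pnatr_eq0.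
have [nu nu_prim] := C_prim_root_exists n_gt0.
have nu_neq1 : nu != 1 by rewrite -(prim_order_dvd nu_prim 1) gtnNdvd.
have nu_1 : `|nu| = 1.
  by apply: (normC_expr_eq1 n_gt0); rewrite (prim_expr_order nu_prim) normr1.
have := Re_le_rootN1 n_gt0 (_ : (z * nu) ^+ n = -1).
rewrite exprMn zn (prim_expr_order nu_prim) mulr1 => /(_ erefl).
rewrite -/z z1 mulN1r !raddfN /= (Creal_ReP 1 _) ?rpred1 // lerN2.
by move/(lt_le_trans (Re_lt1_unit nu_1 nu_neq1)); rewrite ltxx.
Qed.

(* If [omega n] had order [k < n], pick the [n]-th root of unity [y] of maximal
   real part in a coset [nu * <omega n>] other than [<omega n>]: multiplying [y] by
   [omega n] or its conjugate cannot increase its real part, and [Re_le_Re_sqr]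
   then contradicts [Re_unity_le_omega]. *)
Lemma omega_prim n : (0 < n)%N -> n.-primitive_root (omega n).
Proof.
move=> n_gt0; set q := omega n.
have [k q_prim k_dvd_n] := prim_order_exists n_gt0 (omega_unity n_gt0).
have [<- // | k_neq_n] := eqVneq k n.
have k_gt0 := prim_order_gt0 q_prim; have qk := prim_expr_order q_prim.
have n_gt1 : (1 < n)%N.
  by apply: leq_ltn_trans k_gt0 _; rewrite ltn_neqAle k_neq_n dvdn_leq.
have [nu nu_prim] := C_prim_root_exists n_gt0.
have nuk_neq1 : nu ^+ k != 1.
  by rewrite -(prim_order_dvd nu_prim) gtnNdvd // ltn_neqAle k_neq_n dvdn_leq.
have [j _ f_max] := @real_arg_maxP _ _ (Ordinal k_gt0) xpredT
  (fun i => 'Re (nu * q ^+ i)) isT (fun i _ => Creal_Re _).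
set y := nu * q ^+ j.
have y_max i : 'Re (y * q ^+ i) <= 'Re y.
  rewrite /y -mulrA -exprD -(expr_mod _ qk).
  exact: (f_max (Ordinal (ltn_pmod _ k_gt0))).
have yn : y ^+ n = 1.
  by rewrite exprMn (prim_expr_order nu_prim) omega_expr_unity // mul1r.
have y_neq1 : y != 1.
  apply: contra nuk_neq1 => /eqP y1.
  have : y ^+ k = 1 by rewrite y1 expr1n.
  by rewrite exprMn exprAC qk expr1n mulr1 => ->.
have y_1 : `|y| = 1 by apply: (normC_expr_eq1 n_gt0); rewrite yn normr1.
have q_1 : `|q| = 1 by apply: (normC_expr_eq1 n_gt0); rewrite omega_unity // normr1.
have q_lt1 : 'Re q < 1 := Re_lt1_unit q_1 (omega_neq1 n_gt1).
have [|Re_y_ge0] := Re_le_Re_sqr y_1 q_1 q_lt1 (y_max 1%N).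
  by rewrite (unity_conjC k_gt0 qk); apply: y_max.
rewrite Re_sqr_unit // => Re_q_le.
have Re_y_le := Re_unity_le_omega n_gt0 yn y_neq1.
set x := 'Re y in Re_y_ge0 Re_q_le Re_y_le.
have : 0 <= (x * 2 + 1) * (x - 1).
  have -> : (x * 2 + 1) * (x - 1) = x ^+ 2 * 2 - 1 - x by ring.
  by rewrite subr_ge0 (le_trans Re_y_le Re_q_le).
rewrite pmulr_rge0 ?subr_ge0; last by rewrite ltr_pwDr ?ltr01 ?mulr_ge0 ?ler0n.
by move=> /le_trans/(_ Re_y_le)/(lt_le_trans q_lt1); rewrite ltxx.
Qed.

Lemma unitarymx_dot d (U : 'M[algC]_d) (v w : 'cV[algC]_d) :
  U \is unitarymx -> ((U *m v)^t* *m (U *m w) = v^t* *m w)%sesqui.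
Proof. by move=> U_unitary; rewrite trmx_mul map_mxM mulmxA mulmxKtV. Qed.

(* [l + k * n.-1] represents [l - k] modulo [n]. *)
Lemma harm_vec_dot n d (m : 'I_d -> 'I_n) (k l : 'I_n) : (0 < n)%N ->
  (((harm_vec m k)^t* *m harm_vec m l) 0 0 =
   \sum_i omega n ^+ (m i * (l + k * n.-1)))%sesqui.
Proof.
move=> n_gt0; rewrite !mxE; apply: eq_bigr => i _; rewrite !mxE.
rewrite rmorphXn -[X in X ^+ _ * _]/(omega n)^*.
rewrite (unity_conjC n_gt0 (omega_unity n_gt0)) -!exprM -exprD.
by congr (_ ^+ _); ring.
Qed.

Lemma generates_coprime n (J : {set 'I_n}) e : (0 < n)%N -> generates J ->
  {in J, forall j : 'I_n, exists k, (j : nat) = (e * k %% n)%N} -> coprime e n.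
Proof.
move=> n_gt0 genJ eJ; have [n_le1|n_gt1] := leqP n 1.
  by rewrite (_ : n = 1%N) ?coprimen1 //; apply/anti_leq/andP.
set g := gcdn e n.
have g_dvd_mod a : (g %| a %% n)%N = (g %| a)%N by rewrite /dvdn modn_dvdm ?dvdn_gcdr.
have [c one_eq] := genJ (Ordinal n_gt1).
rewrite /coprime -dvdn1 (_ : 1%N = Ordinal n_gt1) // one_eq g_dvd_mod.
apply: dvdn_sum => j /eJ[k ->]; apply: dvdn_mull.
by rewrite g_dvd_mod dvdn_mulr ?dvdn_gcdl.
Qed.

(* The multiplier is the inverse [e ^ (totient n).-1] of [e] modulo [n]. *)
Lemma mult_equiv_scale n d (m m' : 'I_d -> 'I_n) (sigma : 'S_d) e :
  (0 < n)%N -> coprime e n -> (forall i, (m i : nat) = (e * m' (sigma i) %% n)%N) ->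
  mult_equiv (subset_of m) (subset_of m').
Proof.
move=> n_gt0 e_coprime m_eq; pose b := (e ^ (totient n).-1)%N.
have be1 : (b * e = 1 %[mod n])%N.
  by rewrite /b -expnSr prednK ?totient_gt0 // Euler_exp_totient.
have bm i : (m' (sigma i) : nat) = (b * m i %% n)%N.
  by rewrite m_eq modnMmr mulnA -modnMml be1 modnMml mul1n modn_small.
exists (Ordinal (ltn_pmod b n_gt0)); split; first by rewrite coprime_modl coprimeXl.
move=> k; apply/imsetP/existsP => [[i _ ->]|[_ /andP[/imsetP[i _ ->] /eqP k_eq]]].
  exists (m ((sigma^-1)%g i)); rewrite imset_f //=.
  by rewrite modnMml -bm permKV.
exists (sigma i) => //; apply: val_inj.
by rewrite /= -k_eq bm modnMml.
Qed.

Lemma join_pt_lshift d (x y : 'I_d -> algC) j : join_pt x y (lshift d j) = x j.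
Proof. by rewrite /join_pt (unsplitK (inl j : 'I_d + 'I_d)). Qed.

Lemma join_pt_rshift d (x y : 'I_d -> algC) j : join_pt x y (rshift d j) = y j.
Proof. by rewrite /join_pt (unsplitK (inr j : 'I_d + 'I_d)). Qed.

Theorem lemma4p2 (n d : nat) (m : 'I_d -> 'I_n) :
  (0 < n)%N -> injective m ->
  generates (subset_of m) -> exceptional m ->
  exists y : 'I_d -> algC,
    (forall j, y j ^+ n = 1) /\
    exceptional_point (join_pt (fun i => omega n ^+ (m i : nat)) y).
Proof.
move=> n_gt0 _ genJ [m' [_ [not_mult [U [s [U_unitary [_ hs]]]]]]].
pose k0 : 'I_n := Ordinal n_gt0; pose k1 : 'I_n := Ordinal (ltn_pmod 1 n_gt0).
pose e := (s k1 + s k0 * n.-1)%N; pose y i := omega n ^+ (m' i * e).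
have sum_eq : \sum_i omega n ^+ (m i : nat) = \sum_i y i.
  have := unitarymx_dot (harm_vec m' (s k0)) (harm_vec m' (s k1)) U_unitary.
  rewrite -!hs => /(congr1 (fun M : 'M_1 => M 0 0)); rewrite !harm_vec_dot // => <-.
  apply: eq_bigr => i _; rewrite mul0n addn0.
  by rewrite -[RHS](expr_mod _ (omega_unity n_gt0)) modnMmr muln1 expr_mod ?omega_unity.
exists y; split=> [j|]; first exact: omega_expr_unity.
split; [|split].
- rewrite /in_V (eq_bigr _ (fun j _ => join_pt_lshift _ _ j)).
  by rewrite (eq_bigr _ (fun j _ => join_pt_rshift _ _ j)) sum_eq subrr.
- by move=> i; exists n; rewrite /join_pt; case: split => j; rewrite omega_expr_unity.
case=> sigma y_perm; apply: not_mult.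
have m_eq i : (m i : nat) = (e * m' (sigma i) %% n)%N.
  move/eqP: (y_perm i); rewrite join_pt_lshift join_pt_rshift.
  by rewrite (eq_prim_root_expr (omega_prim n_gt0)) (modn_small (ltn_ord _)) mulnC => /eqP.
apply: (mult_equiv_scale n_gt0 _ m_eq).
apply: (generates_coprime n_gt0 genJ) => _ /imsetP[i _ ->].
by exists (m' (sigma i)).
Qed.
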